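(* For every $k\geq 2$, with $n=2^k$, every cancellation-free linear circuit that computes the $n\times n$ Sierpinski gasket matrix $S_k$ has size at least $\frac{1}{2}n\log_2 n$.
   Context: The Sierpinski gasket matrices are defined by $S_0=(1)$ and $S_{k+1}=\begin{pmatrix}S_k&0\\S_k&S_k\end{pmatrix}$ (a $2^k\times 2^k$ matrix over $\mathbb{F}_2$). A linear circuit over $\mathbb{F}_2$ with inputs $x_1,\ldots,x_n$ is a directed acyclic graph whose in-degree-0 nodes are the inputs and whose other nodes (gates) have in-degree 2 and compute the XOR of their two children; $n$ nodes are designated as outputs $y_1,\ldots,y_n$, and the circuit computes $A$ if $\mathbf{y}=A\mathbf{x}$ for all $\mathbf{x}\in\mathbb{F}_2^n$. The size is the number of gates. The value vector $\kappa(u)\in\mathbb{F}_2^n$ of a node $u$ has $\kappa(u)_i=1$ iff $x_i$ occurs in the parity computed at $u$. A linear circuit is cancellation-free if whenever there is a directed path from a node $w$ to a node $u$, $\kappa(u)\geq\kappa(w)$ coordinatewise. *)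

From mathcomp Require Import all_boot all_order all_algebra.
Set Implicit Arguments. Unset Strict Implicit. Unset Printing Implicit Defensive.
Import GRing.Theory.
Local Open Scope ring_scope.

Lemma pow2S_add (k : nat) : (2 ^ k + 2 ^ k = 2 ^ k.+1)%N.
Proof. by rewrite expnS mul2n addnn. Qed.

Fixpoint sierpinski (k : nat) : 'M['F_2]_(2 ^ k) :=
  match k with
  | 0 => 1%:M
  | k'.+1 => castmx (pow2S_add k', pow2S_add k')
               (block_mx (sierpinski k') 0 (sierpinski k') (sierpinski k'))
  end.

(* Nodes are natural numbers
   v < n + csize C: nodes 0..n-1 are the inputs x_1..x_n (node j is x_{j+1});
   node n+i (i < csize C) is the i-th gate, with two distinct children
   cleft i, cright i, both < n+i (a topological numbering of the DAG;
   every DAG admits one).  cout j is the node designated as output y_{j+1}. *)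
Record lcircuit (n : nat) := LCircuit {
  csize : nat;
  cleft : nat -> nat;
  cright : nat -> nat;
  cout : 'I_n -> nat
}.

Definition wf_circuit n (C : lcircuit n) : Prop :=
  (forall i, (i < csize C)%N ->
     [/\ (cleft C i < n + i)%N, (cright C i < n + i)%N & cleft C i != cright C i])
  /\ (forall j, (cout C j < n + csize C)%N).

(* value vectors kappa(v) in F_2^n, as boolean vectors *)
Fixpoint kappa_aux n (C : lcircuit n) (fuel v : nat) : 'I_n -> bool :=
  match fuel with
  | 0 => fun j : 'I_n => v == nat_of_ord j
  | f.+1 => if (v < n)%N then fun j : 'I_n => v == nat_of_ord j
            else fun j : 'I_n => xorb (kappa_aux C f (cleft C (v - n)%N) j)
                               (kappa_aux C f (cright C (v - n)%N) j)
  end.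

(* children of a node have strictly smaller index, so fuel v.+1 suffices *)
Definition kappa n (C : lcircuit n) (v : nat) : 'I_n -> bool :=
  kappa_aux C v.+1 v.

Definition cedge n (C : lcircuit n) (w u : nat) : bool :=
  [&& (n <= u)%N, (u < n + csize C)%N &
      (w == cleft C (u - n)%N) || (w == cright C (u - n)%N)].

Inductive creach n (C : lcircuit n) : nat -> nat -> Prop :=
  | creach_refl w : creach C w w
  | creach_step w u v : creach C w u -> cedge C u v -> creach C w v.

Definition cancellation_free n (C : lcircuit n) : Prop :=
  forall w u, creach C w u -> forall j, (kappa C w j ==> kappa C u j).

Definition computes n (C : lcircuit n) (A : 'M['F_2]_n) : Prop :=
  forall i j, A i j = (kappa C (cout C i) j : nat)%:R.

From mathcomp Require Import all_boot all_order all_algebra.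
From mathcomp Require Import zify.
Set Implicit Arguments. Unset Strict Implicit. Unset Printing Implicit Defensive.

(* Call a pattern of order m a choice of inputs x_0, ..., x_(2^m - 1) and nodes
   o_0, ..., o_(2^m - 1) such that x_j occurs in o_i exactly when S_m has a one
   at (i, j).  Count the gates both of whose children contain some x_j and whose
   value vector lies below that of some o_i; by induction on m there are at
   least m 2^(m-1) of them.  The upper-left and lower-right quadrants of a
   pattern of order m + 1 are patterns of order m, and their counted gates are
   disjoint: in a cancellation-free circuit a gate below an upper output never
   contains a right-half input.  For each i < 2^m, follow a path from x_i to
   o_(i + 2^m); it must enter the set of nodes containing a right-half input,
   and the gate where it does so is a further counted gate belonging to neither
   quadrant.  Distinct i give distinct such gates, since the gate contains x_i
   and lies below o_(i + 2^m). *)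

Lemma creach_cross n (C : lcircuit n) (P : pred nat) w v :
  creach C w v -> ~~ P w -> P v ->
  exists u u', [/\ creach C w u, ~~ P u, cedge C u u', P u' & creach C u' v].
Proof.
elim=> [x|x y z Rxy IH Eyz] Pw Pv; first by rewrite Pv in Pw.
case Py: (P y); last by exists y, z; split; rewrite ?Py //; apply: creach_refl.
have [u [u' [Rwu Pu Euu' Pu' Ru'y]]] := IH Pw Py.
by exists u, u'; split=> //; apply: creach_step Ru'y Eyz.
Qed.

Section Circuit.

Variables (n : nat) (C : lcircuit n).
Hypothesis wfC : wf_circuit C.

Lemma kappa_aux_fuel f f' v j : (v < f)%N -> (v < f')%N -> (v < n + csize C)%N ->
  kappa_aux C f v j = kappa_aux C f' v j.
Proof.
have [wf_gate _] := wfC.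
elim: f f' v => [|f IH] [|f'] v //= ltvf ltvf' ltvC.
case: ifP => // /negbT; rewrite -leqNgt => lenv.
have [ltl ltr _] := wf_gate (v - n) ltac:(lia).
by rewrite (IH f') ?(IH f' (cright C (v - n))) //; lia.
Qed.

Lemma kappa_input v j : (v < n)%N -> kappa C v j = (v == j).
Proof. by move=> ltvn; rewrite /kappa /= ltvn. Qed.

Lemma kappa_gate g j : (g < csize C)%N ->
  kappa C (n + g) j = xorb (kappa C (cleft C g) j) (kappa C (cright C g) j).
Proof.
move=> ltgC; have [wf_gate _] := wfC; have [ltl ltr _] := wf_gate g ltgC.
rewrite /kappa /= ltnNge leq_addr /= addKn.
by rewrite (@kappa_aux_fuel (n + g) (cleft C g).+1 (cleft C g))
  ?(@kappa_aux_fuel (n + g) (cright C g).+1 (cright C g)) //; lia.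
Qed.

Lemma cedge_left g : (g < csize C)%N -> cedge C (cleft C g) (n + g).
Proof. by move=> ltgC; rewrite /cedge leq_addr ltn_add2l ltgC addKn eqxx. Qed.

Lemma cedge_right g : (g < csize C)%N -> cedge C (cright C g) (n + g).
Proof. by move=> ltgC; rewrite /cedge leq_addr ltn_add2l ltgC addKn eqxx orbT. Qed.

Lemma creach_of_kappa u j : (u < n + csize C)%N -> kappa C u j -> creach C j u.
Proof.
elim/ltn_ind: u => u IH ltuC.
have [ltun|lenu] := ltnP u n.
  by rewrite kappa_input // => /eqP ->; apply: creach_refl.
have [wf_gate _] := wfC; have [ltl ltr _] := wf_gate (u - n) ltac:(lia).
have -> : u = n + (u - n) by lia.
rewrite kappa_gate; last by lia.
case: (kappa C (cleft C (u - n)) j) / idP => [kl _|_ /= kr].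
  by apply: creach_step (cedge_left _); [apply: IH | lia]; lia.
by apply: creach_step (cedge_right _); [apply: IH | lia]; lia.
Qed.

Hypothesis cfC : cancellation_free C.

Lemma kappa_cedge u v j : cedge C u v -> kappa C u j -> kappa C v j.
Proof. by move=> Euv; apply/implyP/cfC; apply: creach_step Euv; apply: creach_refl. Qed.

End Circuit.

Lemma cedge_gate n (C : lcircuit n) u v : cedge C u v ->
  exists2 g : 'I_(csize C), v = n + g & (u == cleft C g) || (u == cright C g).
Proof.
case/and3P=> lenv ltvC child; have ltgC : (v - n < csize C)%N by lia.
by exists (Ordinal ltgC) => //=; lia.
Qed.

Fixpoint sierp_entry (m i j : nat) : bool :=
  match m with
  | 0 => true
  | m'.+1 => if (i < 2 ^ m')%N then (j < 2 ^ m')%N && sierp_entry m' i j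
             else if (j < 2 ^ m')%N then sierp_entry m' (i - 2 ^ m') j
             else sierp_entry m' (i - 2 ^ m') (j - 2 ^ m')
  end.

Lemma sierp_entry_ul m i j : (i < 2 ^ m)%N -> (j < 2 ^ m)%N ->
  sierp_entry m.+1 i j = sierp_entry m i j.
Proof. by move=> lti ltj /=; rewrite lti ltj. Qed.

Lemma sierp_entry_ur m i j : (i < 2 ^ m)%N -> sierp_entry m.+1 i (j + 2 ^ m) = false.
Proof. by move=> lti /=; rewrite lti ltnNge leq_addl. Qed.

Lemma sierp_entry_dl m i j : (j < 2 ^ m)%N ->
  sierp_entry m.+1 (i + 2 ^ m) j = sierp_entry m i j.
Proof. by move=> ltj /=; rewrite ltnNge leq_addl /= ltj addnK. Qed.

Lemma sierp_entry_dr m i j : sierp_entry m.+1 (i + 2 ^ m) (j + 2 ^ m) = sierp_entry m i j.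
Proof. by rewrite /= !ltnNge !leq_addl /= !addnK. Qed.

Lemma sierp_entry_diag m i : (i < 2 ^ m)%N -> sierp_entry m i i.
Proof.
elim: m i => [|m IH] i // lti /=; rewrite expnS in lti.
by have [ltim|leim] := ltnP i (2 ^ m); rewrite IH //; lia.
Qed.

Lemma sierp_entry_anti m i j : (i < 2 ^ m)%N -> (j < 2 ^ m)%N ->
  sierp_entry m i j -> sierp_entry m j i -> i = j.
Proof.
elim: m i j => [|m IH] i j lti ltj /=; first by rewrite expn0 in lti ltj; lia.
rewrite expnS in lti ltj.
have [ltim|leim] := ltnP i (2 ^ m); have [ltjm|lejm] := ltnP j (2 ^ m) => //=.
- exact: IH.
- by move=> sij sji; have := IH (i - 2 ^ m) (j - 2 ^ m); lia.
Qed.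

Lemma sierpinskiE k (i j : 'I_(2 ^ k)) :
  sierpinski k i j = (sierp_entry k i j : nat)%:R%R.
Proof.
elim: k i j => [|k IH] i j.
  by rewrite /= mxE !ord1.
rewrite /= castmxE.
set i' := cast_ord _ i; set j' := cast_ord _ j.
rewrite -[nat_of_ord i]/(nat_of_ord i') -[nat_of_ord j]/(nat_of_ord j').
case: (split_ordP i') => a ->; case: (split_ordP j') => b -> /=.
- by rewrite block_mxEul IH.
- by rewrite block_mxEur mxE.
- by rewrite block_mxEdl IH addKn.
- by rewrite block_mxEdr IH !addKn.
Qed.

Lemma cardsU_disjoint (T : finType) (A B : {set T}) :
  A :&: B = set0 -> #|A :|: B| = (#|A| + #|B|)%N.
Proof. by move=> AB0; rewrite -cardsUI AB0 cards0 addn0. Qed.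

Definition shift T (h : nat) (F : nat -> T) (j : nat) : T := F (j + h).

Section Counting.

Variables (n : nat) (C : lcircuit n).
Hypotheses (wfC : wf_circuit C) (cfC : cancellation_free C).

Definition hits m (X : nat -> 'I_n) (v : nat) : bool :=
  [exists j : 'I_(2 ^ m), kappa C v (X j)].

Definition essential m (X : nat -> 'I_n) (g : 'I_(csize C)) : bool :=
  hits m X (cleft C g) && hits m X (cright C g).

Definition below_node (g v : nat) : bool :=
  [forall j, kappa C (n + g) j ==> kappa C v j].

Definition below m (O : nat -> nat) (g : 'I_(csize C)) : bool :=
  [exists i : 'I_(2 ^ m), below_node g (O i)].

Definition counted_gates m X O : {set 'I_(csize C)} :=
  [set g | essential m X g && below m O g].

Definition crossing_gates m X O : {set 'I_(csize C)} :=
  [set g in counted_gates m.+1 X O |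
     hits m (shift (2 ^ m) X) (n + g) && ~~ essential m (shift (2 ^ m) X) g].

Definition sierp_pattern m (X : nat -> 'I_n) (O : nat -> nat) : Prop :=
  (forall i, (i < 2 ^ m)%N -> (O i < n + csize C)%N) /\
  (forall i j, (i < 2 ^ m)%N -> (j < 2 ^ m)%N -> kappa C (O i) (X j) = sierp_entry m i j).

Lemma hits_at m X v j : (j < 2 ^ m)%N -> kappa C v (X j) -> hits m X v.
Proof. by move=> ltj kvj; apply/existsP; exists (Ordinal ltj). Qed.

Section Reindex.

Variables (m m' : nat) (f : nat -> nat).
Hypothesis f_bound : forall j, (j < 2 ^ m)%N -> (f j < 2 ^ m')%N.

Lemma hits_reindex X v : hits m (fun j => X (f j)) v -> hits m' X v.
Proof. by case/existsP=> j; apply: hits_at (f_bound (ltn_ord j)). Qed.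

Lemma below_reindex O g : below m (fun i => O (f i)) g -> below m' O g.
Proof. by case/existsP=> i bgi; apply/existsP; exists (Ordinal (f_bound (ltn_ord i))). Qed.

Lemma counted_gates_reindex X O :
  counted_gates m (fun j => X (f j)) (fun i => O (f i)) \subset counted_gates m' X O.
Proof.
apply/subsetP=> g; rewrite !inE /essential => /andP[/andP[hl hr] bg].
by rewrite !hits_reindex // below_reindex.
Qed.

End Reindex.

Lemma hits_gate m Y (g : 'I_(csize C)) :
  hits m Y (n + g) = hits m Y (cleft C g) || hits m Y (cright C g).
Proof.
apply/idP/idP.
  case/existsP=> j; rewrite kappa_gate //.
  by case: (kappa C (cleft C g) _) / idP => [kl _|_ kr]; apply/orP; [left|right];
    apply: hits_at (ltn_ord j) _.
case/orP=> /existsP[j kj]; apply: hits_at (ltn_ord j) _; apply: kappa_cedge kj => //.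
  exact: cedge_left.
exact: cedge_right.
Qed.

Section Pattern.

Variables (m : nat) (X : nat -> 'I_n) (O : nat -> nat).
Hypothesis patXO : sierp_pattern m.+1 X O.

Let expS_double : 2 ^ m.+1 = 2 ^ m + 2 ^ m.
Proof. by rewrite expnS mul2n addnn. Qed.

Lemma sierp_pattern_ul : sierp_pattern m X O.
Proof.
have [ltO kO] := patXO; rewrite expS_double in ltO kO.
by split=> [i lti|i j lti ltj]; [apply: ltO | rewrite kO ?sierp_entry_ul //]; lia.
Qed.

Lemma sierp_pattern_dr : sierp_pattern m (shift (2 ^ m) X) (shift (2 ^ m) O).
Proof.
have [ltO kO] := patXO; rewrite expS_double in ltO kO.
by split=> [i lti|i j lti ltj]; [apply: ltO | rewrite /shift kO ?sierp_entry_dr //]; lia.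
Qed.

Lemma below_misses_right g j : below m O g -> (j < 2 ^ m)%N ->
  ~~ kappa C (n + g) (X (j + 2 ^ m)).
Proof.
have [_ kO] := patXO; rewrite expS_double in kO.
case/existsP=> i /forallP/(_ (X (j + 2 ^ m)))/implyP bgi ltj; apply/negP=> /bgi.
have lti := ltn_ord i.
by rewrite kO ?sierp_entry_ur //; lia.
Qed.

Lemma crossing_gate_exists i : (i < 2 ^ m)%N ->
  exists g : 'I_(csize C), [&& g \in crossing_gates m X O, kappa C (n + g) (X i)
                              & below_node g (O (i + 2 ^ m))].
Proof.
move=> lti; have [ltO kO] := patXO; rewrite expS_double in ltO kO.
set Y := shift (2 ^ m) X.
have kOX : kappa C (O (i + 2 ^ m)) (X i).
  by rewrite kO ?sierp_entry_dl ?sierp_entry_diag //; lia.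
have inputs_apart : ~~ hits m Y (X i).
  apply/existsP; case=> -[j ltj]; rewrite kappa_input // => /eqP/val_inj XiYj.
  have := kO i (j + 2 ^ m) ltac:(lia) ltac:(lia).
  by rewrite -[X _]/(Y j) -XiYj kO ?sierp_entry_ur ?sierp_entry_ul ?sierp_entry_diag //; lia.
have hitsO : hits m Y (O (i + 2 ^ m)).
  by apply: (hits_at lti); rewrite /Y /shift kO ?sierp_entry_dr ?sierp_entry_diag //; lia.
have RXO := creach_of_kappa wfC (ltO (i + 2 ^ m) ltac:(lia)) kOX.
have [u [u' [Ru nu Eu Yg Rg]]] := creach_cross (P := hits m Y) RXO inputs_apart hitsO.
have [g Eu' child] := cedge_gate Eu; subst u'.
have kui : kappa C u (X i) by apply: implyP (cfC Ru (X i)) _; rewrite kappa_input.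
have hitsXu : hits m.+1 X u by apply: hits_at kui; rewrite expS_double; lia.
have hitsXY v : hits m Y v -> hits m.+1 X v.
  by apply: (hits_reindex (f := addn^~ (2 ^ m))) => j; rewrite expS_double; lia.
have ltim : (i + 2 ^ m < 2 ^ m.+1)%N by rewrite expS_double; lia.
have essX : essential m.+1 X g.
  move: (Yg); rewrite hits_gate /essential.
  by case/orP: child => /eqP Eug; rewrite -Eug (negbTE nu) hitsXu ?orbF ?andbT; apply: hitsXY.
have nessY : ~~ essential m Y g.
  by rewrite /essential; case/orP: child => /eqP <-; rewrite (negbTE nu) ?andbF.
have below_g : below_node g (O (i + 2 ^ m)) by apply/forallP; apply: cfC Rg.
exists g; rewrite !inE (kappa_cedge cfC Eu kui) Yg essX nessY below_g !andbT /=.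
by apply/existsP; exists (Ordinal ltim).
Qed.

Lemma crossing_gates_card : (2 ^ m <= #|crossing_gates m X O|)%N.
Proof.
have [_ kO] := patXO; rewrite expS_double in kO.
have [f Hf] := fin_all_exists (fun i : 'I_(2 ^ m) => crossing_gate_exists (ltn_ord i)).
have entry g (i i' : 'I_(2 ^ m)) :
    kappa C (n + g) (X i) -> below_node g (O (i' + 2 ^ m)) -> sierp_entry m i' i.
  move=> kgi /forallP/(_ (X i))/implyP/(_ kgi).
  have lti := ltn_ord i; have lti' := ltn_ord i'.
  by rewrite kO ?sierp_entry_dl //; lia.
have f_inj : injective f.
  move=> i i' Ef; have := Hf i; have := Hf i'; rewrite Ef.
  move=> /and3P[_ ki' bi'] /and3P[_ ki bi]; apply/val_inj.
  exact: sierp_entry_anti (ltn_ord i) (ltn_ord i') (entry _ _ _ ki' bi) (entry _ _ _ ki bi').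
rewrite -[leqLHS]card_ord -(card_imset _ f_inj); apply: subset_leq_card.
by apply/subsetP=> _ /imsetP[i _ ->]; case/and3P: (Hf i).
Qed.

End Pattern.

Lemma counted_gates_lower_bound m X O :
  sierp_pattern m X O -> (m * 2 ^ m <= 2 * #|counted_gates m X O|)%N.
Proof.
elim: m X O => [|m IH] X O patXO; first by rewrite mul0n.
set Y := shift (2 ^ m) X.
set G1 := counted_gates m X O; set G2 := counted_gates m Y (shift (2 ^ m) O).
set G3 := crossing_gates m X O.
have expS_double : 2 ^ m.+1 = 2 ^ m + 2 ^ m by rewrite expnS mul2n addnn.
have sub : G1 :|: G2 :|: G3 \subset counted_gates m.+1 X O.
  rewrite !subUset; apply/andP; split; first (apply/andP; split).
  - by apply: (counted_gates_reindex (f := id)) => j; rewrite expS_double; lia.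
  - by apply: (counted_gates_reindex (f := addn^~ (2 ^ m))) => j; rewrite expS_double; lia.
  - by apply/subsetP=> g; rewrite inE => /andP[].
have G1_G2 : G1 :&: G2 = set0.
  apply/setP=> g; rewrite !inE /essential.
  apply/negbTE/negP=> /andP[/andP[_ bg] /andP[/andP[/existsP[j kj] _] _]].
  have := below_misses_right patXO bg (ltn_ord j).
  by rewrite (kappa_cedge cfC (cedge_left _) kj).
have G1_G3 : G1 :&: G3 = set0.
  apply/setP=> g; rewrite !inE.
  apply/negbTE/negP=> /andP[/andP[_ bg] /andP[_ /andP[/existsP[j kj] _]]].
  by have := below_misses_right patXO bg (ltn_ord j); rewrite kj.
have G2_G3 : G2 :&: G3 = set0.
  apply/setP=> g; rewrite !inE.
  by apply/negbTE/negP=> /andP[/andP[eg _] /andP[_ /andP[_ neg]]]; rewrite eg in neg.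
have := subset_leq_card sub.
rewrite !cardsU_disjoint ?setIUl ?G1_G3 ?G2_G3 ?setU0 //.
have := IH _ _ (sierp_pattern_ul patXO); have := IH _ _ (sierp_pattern_dr patXO).
have := crossing_gates_card patXO; rewrite expS_double -/G1 -/G2 -/G3; lia.
Qed.

End Counting.

Lemma bool_F2_inj (a b : bool) : ((a : nat)%:R = (b : nat)%:R :> 'F_2)%R -> a = b.
Proof. by case: a; case: b. Qed.

Theorem theorem4 (k : nat) : (2 <= k)%N ->
  forall C : lcircuit (2 ^ k),
    wf_circuit C -> cancellation_free C -> computes C (sierpinski k) ->
    (k * 2 ^ k <= 2 * csize C)%N.
Proof.
move=> _ C wfC cfC compC.
have pos : (2 ^ k).-1.+1 = 2 ^ k by rewrite prednK // expn_gt0.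
pose X j : 'I_(2 ^ k) := cast_ord pos (inord j).
have XE j : (j < 2 ^ k)%N -> X j = j :> nat by move=> ltj; rewrite /= inordK // pos.
have pattern : sierp_pattern C k X (fun i => cout C (X i)).
  split=> [i _|i j lti ltj]; first by case: wfC.
  by apply: bool_F2_inj; rewrite -compC sierpinskiE !XE.
apply: leq_trans (counted_gates_lower_bound wfC cfC pattern) _.
by rewrite leq_mul2l (leq_trans (max_card _)) ?card_ord ?orbT.
Qed.
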